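(* Let $N, S \ge 1$, let $\overline{C}_1,\dots,\overline{C}_S \in \mathbb{R}^{N\times N}$ be symmetric matrices, and let $h \in \Sigma_N$. Define $D_h = \mathrm{diag}(h)$ and the matrix $M \in \mathbb{R}^{S\times S}$ by $M_{pq} = \langle D_h \overline{C}_p, \overline{C}_q D_h\rangle_F$. Then $M$ is positive semi-definite, so $\|x\|_M := \sqrt{x^\top M x}$ defines a (pseudo-)norm on $\mathbb{R}^S$ and $d_M(x,y)=\|x-y\|_M$ a Mahalanobis (pseudo-)distance. Moreover, for any $w^{(1)}, w^{(2)} \in \Sigma_S$, $$GW_2\Big(\sum_{s=1}^S w^{(1)}_s \overline{C}_s,\ \sum_{s=1}^S w^{(2)}_s \overline{C}_s,\ h,\ h\Big) \le \|w^{(1)} - w^{(2)}\|_M .$$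
   Context: $\Sigma_N = \{h \in \mathbb{R}_+^N : \sum_i h_i = 1\}$. For $h^X\in\Sigma_{N^X}$, $h^Y\in\Sigma_{N^Y}$, $\mathcal{U}(h^X,h^Y) = \{T \in \mathbb{R}_+^{N^X\times N^Y} : T\mathbf{1}_{N^Y} = h^X,\ T^\top \mathbf{1}_{N^X} = h^Y\}$. For matrices $C^X \in \mathbb{R}^{N^X\times N^X}$, $C^Y\in\mathbb{R}^{N^Y\times N^Y}$, the Gromov–Wasserstein distance is $GW_2(C^X,C^Y,h^X,h^Y) = \big(\min_{T\in\mathcal{U}(h^X,h^Y)} \sum_{i,j,k,l} (C^X_{ij} - C^Y_{kl})^2 T_{ik}T_{jl}\big)^{1/2}$. $\langle A,B\rangle_F = \mathrm{tr}(A^\top B)$. *)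

From HB Require Import structures.
From mathcomp Require Import all_boot all_order all_algebra.
From mathcomp Require Import boolp classical_sets reals.
Set Implicit Arguments. Unset Strict Implicit. Unset Printing Implicit Defensive.
Import Order.TTheory GRing.Theory Num.Theory.
Local Open Scope ring_scope.
Local Open Scope classical_set_scope.

Section Defs.
Variable R : realType.

Definition simplex (N : nat) (h : 'rV[R]_N) : Prop :=
  (forall i, 0 <= h 0 i) /\ \sum_i h 0 i = 1.

Definition coupling (NX NY : nat) (hX : 'rV[R]_NX) (hY : 'rV[R]_NY)
  (T : 'M[R]_(NX, NY)) : Prop :=
  [/\ forall i k, 0 <= T i k,
      forall i, \sum_k T i k = hX 0 i
    & forall k, \sum_i T i k = hY 0 k].

Definition gw_cost (NX NY : nat) (CX : 'M[R]_NX) (CY : 'M[R]_NY)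
  (T : 'M[R]_(NX, NY)) : R :=
  \sum_i \sum_j \sum_k \sum_l (CX i j - CY k l) ^+ 2 * T i k * T j l.

(* GW_2 = (min over couplings of the cost)^(1/2); the minimum is written as an
   infimum (it is attained, the coupling polytope being compact) *)
Definition GW2 (NX NY : nat) (CX : 'M[R]_NX) (CY : 'M[R]_NY)
  (hX : 'rV[R]_NX) (hY : 'rV[R]_NY) : R :=
  Num.sqrt (inf [set c | exists T, coupling hX hY T /\ c = gw_cost CX CY T]).

Definition frob (m n : nat) (A B : 'M[R]_(m, n)) : R := \tr (A^T *m B).

Definition Mmat (N S : nat) (C : 'I_S -> 'M[R]_N) (h : 'rV[R]_N) : 'M[R]_S :=
  \matrix_(p, q) frob (diag_mx h *m C p) (C q *m diag_mx h).

Definition qform (S : nat) (M : 'M[R]_S) (x : 'rV[R]_S) : R :=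
  (x *m M *m x^T) 0 0.

Definition Mnorm (S : nat) (M : 'M[R]_S) (x : 'rV[R]_S) : R :=
  Num.sqrt (qform M x).

Definition wsum (N S : nat) (C : 'I_S -> 'M[R]_N) (w : 'rV[R]_S) : 'M[R]_N :=
  \sum_s w 0 s *: C s.

End Defs.

From mathcomp Require Import all_boot all_order all_algebra.
From mathcomp Require Import reals.
From mathcomp Require Import ring.
Import Order.TTheory GRing.Theory Num.Theory.
Local Open Scope ring_scope.

(* Entrywise, [M] is the Gram matrix of the [C s] for the inner product
   <A, B> = sum_ij h_i h_j A_ij B_ij, so x^T M x = sum_ij h_i h_j (sum_s x_s C_s)_ij^2
   is nonnegative.  The identity plan diag(h) couples h with itself, and its
   GW cost between W1 = sum_s w1_s C_s and W2 = sum_s w2_s C_s is exactly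
   sum_ij h_i h_j (W1 - W2)_ij^2 = (w1 - w2)^T M (w1 - w2); GW_2^2 being an
   infimum over couplings, it is at most this value. *)

Lemma sum_mulr_diag_mx (R : pzRingType) (N : nat) (h : 'rV[R]_N) (F : 'I_N -> R) i :
  \sum_k F k * diag_mx h i k = F i * h 0 i.
Proof.
rewrite (bigD1 i) //= big1 ?addr0; first by rewrite mxE eqxx mulr1n.
by move=> k /negbTE ne; rewrite mxE eq_sym ne mulr0n mulr0.
Qed.

Section GW.
Variable R : realType.

Lemma diag_mx_coupling (N : nat) (h : 'rV[R]_N) :
  (forall i, 0 <= h 0 i) -> coupling h h (diag_mx h).
Proof.
move=> h_ge0; split.
- by move=> i k; rewrite mxE mulrn_wge0.
- move=> i; under eq_bigr do rewrite -[diag_mx h _ _]mul1r.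
  by rewrite sum_mulr_diag_mx mul1r.
- move=> k; under eq_bigr do
    rewrite -[diag_mx h _ _]mul1r -[in X in _ * X]tr_diag_mx mxE.
  by rewrite sum_mulr_diag_mx mul1r.
Qed.

Lemma gw_cost_ge0 (NX NY : nat) (CX : 'M[R]_NX) (CY : 'M[R]_NY) (T : 'M[R]_(NX, NY)) :
  (forall i k, 0 <= T i k) -> 0 <= gw_cost CX CY T.
Proof.
move=> T_ge0; apply: sumr_ge0 => i _; apply: sumr_ge0 => j _.
apply: sumr_ge0 => k _; apply: sumr_ge0 => l _.
by rewrite mulr_ge0 ?T_ge0 // mulr_ge0 ?sqr_ge0 ?T_ge0.
Qed.

Lemma GW2_le_sqrt_gw_cost (NX NY : nat) (CX : 'M[R]_NX) (CY : 'M[R]_NY)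
    (hX : 'rV[R]_NX) (hY : 'rV[R]_NY) (T : 'M[R]_(NX, NY)) :
  coupling hX hY T -> GW2 CX CY hX hY <= Num.sqrt (gw_cost CX CY T).
Proof.
move=> cT; rewrite ler_sqrt; last by case: cT => T_ge0 _ _; exact: gw_cost_ge0.
apply: ge_inf; last by exists T.
by exists 0 => _ [T' [[T'_ge0 _ _] ->]]; exact: gw_cost_ge0.
Qed.

Lemma gw_cost_diag_mx (N : nat) (CX CY : 'M[R]_N) (h : 'rV[R]_N) :
  gw_cost CX CY (diag_mx h) =
  \sum_i \sum_j h 0 i * h 0 j * (CX i j - CY i j) ^+ 2.
Proof.
apply: eq_bigr => i _; apply: eq_bigr => j _.
under eq_bigr do rewrite sum_mulr_diag_mx.
by rewrite -mulr_suml sum_mulr_diag_mx; ring.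
Qed.

Lemma qformE (S : nat) (M : 'M[R]_S) (x : 'rV[R]_S) :
  qform M x = \sum_p \sum_q x 0 p * x 0 q * M p q.
Proof.
rewrite /qform mxE.
under eq_bigr do rewrite [(x *m _) _ _]mxE [x^T _ _]mxE mulr_suml.
by rewrite exchange_big; apply: eq_bigr => p _; apply: eq_bigr => q _ /=; ring.
Qed.

Section Mmat.
Variables (N S : nat) (C : 'I_S -> 'M[R]_N) (h : 'rV[R]_N).

Lemma wsumE (w : 'rV[R]_S) i j :
  wsum C w i j = \sum_s w 0 s * C s i j.
Proof. by rewrite summxE; apply: eq_bigr => s _; rewrite mxE. Qed.

Lemma wsumB (w1 w2 : 'rV[R]_S) :
  wsum C (w1 - w2) = wsum C w1 - wsum C w2.
Proof.
by rewrite /wsum -sumrB; apply: eq_bigr => s _; rewrite !mxE scalerBl.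
Qed.

Lemma MmatE p q :
  Mmat C h p q = \sum_i \sum_j h 0 i * h 0 j * (C p i j * C q i j).
Proof.
rewrite mxE /frob /mxtrace mul_diag_mx mul_mx_diag.
under eq_bigr do rewrite mxE.
rewrite exchange_big; apply: eq_bigr => i _; apply: eq_bigr => j _.
by rewrite !mxE; ring.
Qed.

Lemma qform_Mmat (x : 'rV[R]_S) :
  qform (Mmat C h) x = \sum_i \sum_j h 0 i * h 0 j * wsum C x i j ^+ 2.
Proof.
rewrite qformE.
transitivity (\sum_p \sum_q \sum_i \sum_j
                h 0 i * h 0 j * ((x 0 p * C p i j) * (x 0 q * C q i j))).
  apply: eq_bigr => p _; apply: eq_bigr => q _; rewrite MmatE mulr_sumr.
  apply: eq_bigr => i _; rewrite mulr_sumr; apply: eq_bigr => j _; ring.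
under eq_bigr do rewrite exchange_big.
under eq_bigr do under eq_bigr do rewrite exchange_big.
rewrite exchange_big; under eq_bigr do rewrite exchange_big.
apply: eq_bigr => i _; apply: eq_bigr => j _.
rewrite wsumE expr2 big_distrlr mulr_sumr; apply: eq_bigr => p _.
by rewrite mulr_sumr.
Qed.

Lemma qform_Mmat_ge0 (x : 'rV[R]_S) :
  (forall i, 0 <= h 0 i) -> 0 <= qform (Mmat C h) x.
Proof.
move=> h_ge0; rewrite qform_Mmat; apply: sumr_ge0 => i _; apply: sumr_ge0 => j _.
by rewrite mulr_ge0 ?sqr_ge0 ?mulr_ge0.
Qed.

Lemma gw_cost_wsum_diag_mx (w1 w2 : 'rV[R]_S) :
  gw_cost (wsum C w1) (wsum C w2) (diag_mx h) = qform (Mmat C h) (w1 - w2).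
Proof.
rewrite gw_cost_diag_mx qform_Mmat wsumB.
by apply: eq_bigr => i _; apply: eq_bigr => j _; rewrite !mxE.
Qed.

End Mmat.

End GW.

Theorem proposition1 (R : realType) (N S : nat) (hN : (0 < N)%N) (hS : (0 < S)%N)
  (C : 'I_S -> 'M[R]_N) (hsym : forall s, (C s)^T = C s)
  (h : 'rV[R]_N) (hh : simplex h) :
  (forall x : 'rV[R]_S, 0 <= qform (Mmat C h) x) /\
  (forall w1 w2 : 'rV[R]_S, simplex w1 -> simplex w2 ->
     GW2 (wsum C w1) (wsum C w2) h h <= Mnorm (Mmat C h) (w1 - w2)).
Proof.
have [h_ge0 _] := hh.
split=> [x|w1 w2 _ _]; first exact: qform_Mmat_ge0.
rewrite /Mnorm -gw_cost_wsum_diag_mx.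
exact/GW2_le_sqrt_gw_cost/diag_mx_coupling.
Qed.
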